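(* Let $X_1,\dots,X_n\in\mathbb{R}^d$, and let $f^*=\nabla\psi_{f^*}$ for a differentiable $\psi_{f^*}:\mathbb{R}^d\to\mathbb{R}$ satisfying: (A1) $\psi_{f^*}(z)\ge\psi_{f^*}(x)+\langle\nabla\psi_{f^*}(x),z-x\rangle+\frac{\lambda}{2}\|x-z\|_2^2$ for all $x,z$ (some $\lambda>0$); (A2) $\psi_{f^*}(z)\le\psi_{f^*}(x)+\langle\nabla\psi_{f^*}(x),z-x\rangle+\frac{L}{2}\|x-z\|_2^2$ for all $x,z$ (some $L>0$); (A3) $\max_i\|f^*(X_i)\|_2\le B$ for some $B<\infty$. Let $\theta_i^*=f^*(X_i)$, $\nu_n^*=\frac1n\sum_{i=1}^n\delta_{\theta_i^*}$, $\mu_n=\frac1n\sum_{i=1}^n\delta_{X_i}$, and let $\widehat\nu=\sum_{j=1}^p\widehat\alpha_j\delta_{\widehat\theta_j}$ be any atomic probability measure on $\mathbb{R}^d$ ($\widehat\alpha_j>0$, $\sum_j\widehat\alpha_j=1$). Let $\widehat\Gamma\in\mathbb{R}_+^{n\times p}$ be an optimal coupling, i.e. a minimizer of $\sum_{i,j}\Gamma_{ij}\frac12\|X_i-\widehat\theta_j\|_2^2$ subject to $\sum_i\Gamma_{ij}=\widehat\alpha_j$ for all $j$ and $\sum_j\Gamma_{ij}=1/n$ for all $i$, and define $\widehat f(X_i)=n\sum_{j=1}^p\widehat\Gamma_{ij}\widehat\theta_j$. Then $$\frac1n\sum_{i=1}^n\|\widehat f(X_i)-f^*(X_i)\|_2^2\le\frac{L}{\lambda}\,\mathsf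 W_2^2(\nu_n^*,\widehat\nu).$$
   Context: For probability measures $\mu,\nu$ on $\mathbb{R}^d$ with finite second moments, $\mathsf W_2^2(\mu,\nu)=\inf_{\gamma}\int\int\|x-y\|_2^2\,d\gamma(x,y)$, the infimum over all couplings $\gamma$ of $\mu$ and $\nu$ (probability measures on $\mathbb{R}^d\times\mathbb{R}^d$ with marginals $\mu$ and $\nu$). *)

From HB Require Import structures.
From mathcomp Require Import all_boot all_order all_algebra.
From mathcomp Require Import all_classical all_reals all_analysis.
Set Implicit Arguments. Unset Strict Implicit. Unset Printing Implicit Defensive.
Import Order.TTheory GRing.Theory Num.Theory.
Import numFieldNormedType.Exports.
Local Open Scope ring_scope.
Local Open Scope classical_set_scope.

Section Defs.
Variable R : realType.

Definition dotv (d : nat) (u v : 'rV[R]_d) : R := \sum_(k < d) u 0 k * v 0 k.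
Definition sqnorm2 (d : nat) (u : 'rV[R]_d) : R := dotv u u.
Definition norm2 (d : nat) (u : 'rV[R]_d) : R := Num.sqrt (sqnorm2 u).

Definition is_gradient (d : nat) (psi : 'rV[R]_d -> R) (f : 'rV[R]_d -> 'rV[R]_d) :=
  forall x, differentiable psi x /\ forall h, ('d psi x : 'rV[R]_d -> R) h = dotv (f x) h.

(* Gamma (n x p, entries >= 0) couples the discrete measures
   (1/n) sum_i delta_{a_i}  and  sum_j alpha_j delta_{b_j}  (row/column marginals). *)
Definition is_coupling (n p : nat) (alpha : 'rV[R]_p) (G : 'M[R]_(n, p)) :=
  (forall i j, 0 <= G i j) /\
  (forall j, \sum_(i < n) G i j = alpha 0 j) /\
  (forall i, \sum_(j < p) G i j = n%:R^-1).

Definition coupling_cost (n p d : nat) (a : 'I_n -> 'rV[R]_d) (b : 'I_p -> 'rV[R]_d)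
  (G : 'M[R]_(n, p)) : R :=
  \sum_(i < n) \sum_(j < p) G i j * sqnorm2 (a i - b j).

Definition W2sq_discrete (n p d : nat) (a : 'I_n -> 'rV[R]_d) (alpha : 'rV[R]_p)
  (b : 'I_p -> 'rV[R]_d) : R :=
  inf [set c | exists G : 'M[R]_(n, p), is_coupling alpha G /\ c = coupling_cost a b G].

End Defs.

(** The cost (x, y) |-> psi x + psi^* y - <x, y> (Fenchel-Young gap of the potential
    psi) differs from the quadratic cost |x - y|^2 / 2 only by a sum a x + b y of
    functions of x and of y, which every coupling integrates to the same value; hence
    an optimal coupling for the quadratic cost is also optimal for the Fenchel-Young
    gap.  Strong convexity and smoothness of psi pinch that gap between
    |f x - y|^2 / (2 L) and |f x - y|^2 / (2 lambda), so the optimal coupling moves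
    the points f(X_i) to the atoms at cost at most L / lambda times that of any
    coupling.  Finally the barycentric projection fhat(X_i) is an average of atoms,
    and Jensen's inequality bounds its error by the transport cost. *)
From HB Require Import structures.
From mathcomp Require Import all_boot all_order all_algebra.
From mathcomp Require Import all_classical all_reals all_analysis.
From mathcomp Require Import ring lra.
Set Implicit Arguments. Unset Strict Implicit. Unset Printing Implicit Defensive.
Import Order.TTheory GRing.Theory Num.Theory.
Local Open Scope ring_scope.

Section Euclidean.
Variables (R : realType) (d : nat).
Implicit Types (u v w : 'rV[R]_d) (c : R).

Lemma dotvC u v : dotv u v = dotv v u.
Proof. by apply: eq_bigr => k _; rewrite mulrC. Qed.

Lemma dotvDl u v w : dotv (u + v) w = dotv u w + dotv v w.
Proof. by rewrite /dotv -big_split; apply: eq_bigr => k _; rewrite mxE mulrDl. Qed.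

Lemma dotvNl u w : dotv (- u) w = - dotv u w.
Proof. by rewrite /dotv -sumrN; apply: eq_bigr => k _; rewrite mxE mulNr. Qed.

Lemma dotvZl c u w : dotv (c *: u) w = c * dotv u w.
Proof. by rewrite /dotv mulr_sumr; apply: eq_bigr => k _; rewrite mxE mulrA. Qed.

Lemma dotvBl u v w : dotv (u - v) w = dotv u w - dotv v w.
Proof. by rewrite dotvDl dotvNl. Qed.

Lemma dotvBr u v w : dotv w (u - v) = dotv w u - dotv w v.
Proof. by rewrite dotvC dotvBl !(dotvC w). Qed.

Lemma dotvZr c u w : dotv w (c *: u) = c * dotv w u.
Proof. by rewrite dotvC dotvZl dotvC. Qed.

Lemma sqnorm2_ge0 u : 0 <= sqnorm2 u.
Proof. by apply: sumr_ge0 => k _; rewrite -expr2 sqr_ge0. Qed.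

Lemma sqnorm2B u v : sqnorm2 (u - v) = sqnorm2 u - 2 * dotv u v + sqnorm2 v.
Proof. by rewrite /sqnorm2 dotvBl !dotvBr (dotvC v u); ring. Qed.

Lemma sqnorm2Z c u : sqnorm2 (c *: u) = c ^+ 2 * sqnorm2 u.
Proof. by rewrite /sqnorm2 dotvZl dotvZr; ring. Qed.

Lemma sqnorm2_distC u v : sqnorm2 (u - v) = sqnorm2 (v - u).
Proof. by rewrite !sqnorm2B dotvC; ring. Qed.

Lemma dotv_le_sqnorm2 c u w :
  0 < c -> dotv u w <= (2 * c)^-1 * sqnorm2 u + c / 2 * sqnorm2 w.
Proof.
move=> c_gt0; have := sqnorm2_ge0 (u - c *: w).
rewrite sqnorm2B sqnorm2Z dotvZr => sq_ge0.
rewrite -subr_ge0; suff -> : (2 * c)^-1 * sqnorm2 u + c / 2 * sqnorm2 w - dotv u w =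
  (2 * c)^-1 * (sqnorm2 u - 2 * (c * dotv u w) + c ^+ 2 * sqnorm2 w).
  by rewrite mulr_ge0 // invr_ge0 mulr_ge0 // ltW.
by field; rewrite gt_eqF.
Qed.

Lemma sqnorm2_convex_comb_le (p : nat) (g : 'I_p -> R) (t : 'I_p -> 'rV[R]_d) v :
  (forall j, 0 <= g j) -> \sum_(j < p) g j = 1 ->
  sqnorm2 (\sum_(j < p) g j *: t j - v) <= \sum_(j < p) g j * sqnorm2 (t j - v).
Proof.
move=> g_ge0 g_sum1; rewrite /sqnorm2 /dotv.
under [X in _ <= X]eq_bigr do rewrite mulr_sumr.
rewrite [X in _ <= X]exchange_big /=; apply: ler_sum => k _.
set m := \sum_(j < p) g j * t j 0 k.
have coord_m : (\sum_(j < p) g j *: t j - v) 0 k = m - v 0 k.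
  by rewrite !mxE summxE; congr (_ - _); apply: eq_bigr => j _; rewrite mxE.
have mean_dev : \sum_(j < p) g j * (t j 0 k - v 0 k) = m - v 0 k.
  transitivity (m - (\sum_(j < p) g j) * v 0 k); last by rewrite g_sum1 mul1r.
  by rewrite mulr_suml -sumrB; apply: eq_bigr => j _; ring.
have spread_ge0 : 0 <= \sum_(j < p) g j * (t j 0 k - m) ^+ 2.
  by apply: sumr_ge0 => j _; rewrite mulr_ge0 ?sqr_ge0.
have spread_eq : \sum_(j < p) g j * (t j 0 k - m) ^+ 2 =
    \sum_(j < p) g j * ((t j - v) 0 k * (t j - v) 0 k) - (m - v 0 k) ^+ 2.
  transitivity (\sum_(j < p) g j * ((t j 0 k - v 0 k) * (t j 0 k - v 0 k))
      - 2 * (m - v 0 k) * \sum_(j < p) g j * (t j 0 k - v 0 k)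
      + (m - v 0 k) ^+ 2 * \sum_(j < p) g j).
    by rewrite !mulr_sumr -sumrB -big_split /=; apply: eq_bigr => j _; ring.
  rewrite mean_dev g_sum1; under [in RHS]eq_bigr do rewrite !mxE; ring.
by rewrite coord_m -expr2 -subr_ge0 -spread_eq.
Qed.

End Euclidean.

Section Conjugate.
Variables (R : realType) (d : nat).
Variables (psi : 'rV[R]_d -> R) (f : 'rV[R]_d -> 'rV[R]_d) (lam L : R).
Hypothesis lam_gt0 : 0 < lam.
Hypothesis L_gt0 : 0 < L.
Hypothesis strongly_convex :
  forall x z, psi z >= psi x + dotv (f x) (z - x) + lam / 2 * sqnorm2 (x - z).
Hypothesis smooth :
  forall x z, psi z <= psi x + dotv (f x) (z - x) + L / 2 * sqnorm2 (x - z).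

Definition conjugate (y : 'rV[R]_d) : R := sup (range (fun z => dotv z y - psi z)).

Definition bregman (x z : 'rV[R]_d) : R := psi z - psi x - dotv (f x) (z - x).

Lemma conjugate_argE x y z :
  dotv z y - psi z = dotv x y - psi x + dotv (y - f x) (z - x) - bregman x z.
Proof. by rewrite /bregman !dotvBl !dotvBr (dotvC y x) (dotvC y z); ring. Qed.

Lemma conjugate_arg_le x y z :
  dotv z y - psi z <= dotv x y - psi x + (2 * lam)^-1 * sqnorm2 (f x - y).
Proof.
have breg_ge : lam / 2 * sqnorm2 (z - x) <= bregman x z.
  by rewrite /bregman sqnorm2_distC; have := strongly_convex x z; lra.
have young := dotv_le_sqnorm2 (y - f x) (z - x) lam_gt0.
by rewrite (conjugate_argE x) sqnorm2_distC; lra.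
Qed.

Lemma fenchel_gap_le x y :
  psi x + conjugate y - dotv x y <= (2 * lam)^-1 * sqnorm2 (f x - y).
Proof.
suff : conjugate y <= dotv x y - psi x + (2 * lam)^-1 * sqnorm2 (f x - y) by lra.
apply: ge_sup; first by exists (dotv 0 y - psi 0), 0.
by move=> _ [z _ <-]; apply: conjugate_arg_le.
Qed.

Lemma fenchel_gap_ge x y :
  (2 * L)^-1 * sqnorm2 (f x - y) <= psi x + conjugate y - dotv x y.
Proof.
(* z attains equality in Young's inequality dotv_le_sqnorm2 with c = L. *)
set v := y - f x; set z := x + L^-1 *: v.
have zBx : z - x = L^-1 *: v by rewrite /z addrAC subrr add0r.
have breg_le : bregman x z <= L / 2 * sqnorm2 (z - x).
  by rewrite /bregman sqnorm2_distC; have := smooth x z; lra.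
have arg_ge : dotv x y - psi x + (2 * L)^-1 * sqnorm2 v <= dotv z y - psi z.
  rewrite zBx sqnorm2Z in breg_le.
  rewrite [X in _ <= X](conjugate_argE x) zBx dotvZr -/v -/(sqnorm2 v).
  suff -> : (2 * L)^-1 * sqnorm2 v = L^-1 * sqnorm2 v - L / 2 * (L^-1 ^+ 2 * sqnorm2 v).
    by lra.
  by field; rewrite gt_eqF.
have z_le_sup : dotv z y - psi z <= conjugate y.
  apply: ub_le_sup; last by exists z.
  exists (dotv 0 y - psi 0 + (2 * lam)^-1 * sqnorm2 (f 0 - y)).
  by move=> _ [w _ <-]; apply: conjugate_arg_le.
by rewrite sqnorm2_distC -/v; lra.
Qed.

End Conjugate.

Section Transport.
Variables (R : realType) (n p : nat) (alpha : 'rV[R]_p).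
Implicit Types (G : 'M[R]_(n, p)) (C E : 'I_n -> 'I_p -> R).

Definition transport G C : R := \sum_(i < n) \sum_(j < p) G i j * C i j.

Lemma transportD G C E :
  transport G (fun i j => C i j + E i j) = transport G C + transport G E.
Proof.
rewrite /transport -big_split; apply: eq_bigr => i _ /=.
by rewrite -big_split; apply: eq_bigr => j _; rewrite mulrDr.
Qed.

Lemma transportZ G (k : R) C : transport G (fun i j => k * C i j) = k * transport G C.
Proof.
rewrite /transport mulr_sumr; apply: eq_bigr => i _.
by rewrite mulr_sumr; apply: eq_bigr => j _; rewrite mulrCA.
Qed.

Lemma ler_transport G C E :
  is_coupling alpha G -> (forall i j, C i j <= E i j) -> transport G C <= transport G E.
Proof.
move=> [G_ge0 _] CE; apply: ler_sum => i _; apply: ler_sum => j _.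
exact: ler_wpM2l.
Qed.

Lemma transport_separable G (a : 'I_n -> R) (b : 'I_p -> R) :
  is_coupling alpha G ->
  transport G (fun i j => a i + b j) =
  \sum_(i < n) n%:R^-1 * a i + \sum_(j < p) alpha 0 j * b j.
Proof.
move=> [_ [col_sum row_sum]]; rewrite transportD; congr (_ + _).
  by apply: eq_bigr => i _; rewrite -mulr_suml row_sum.
by rewrite /transport exchange_big; apply: eq_bigr => j _; rewrite -mulr_suml col_sum.
Qed.

Lemma optimal_coupling_compare (C E : 'I_n -> 'I_p -> R) (a : 'I_n -> R) (b : 'I_p -> R)
    (k1 k2 : R) (Gamma G : 'M[R]_(n, p)) :
  (forall i j, k1 * E i j <= C i j + (a i + b j)) ->
  (forall i j, C i j + (a i + b j) <= k2 * E i j) ->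
  is_coupling alpha Gamma -> is_coupling alpha G ->
  transport Gamma C <= transport G C ->
  k1 * transport Gamma E <= k2 * transport G E.
Proof.
move=> lowE upE cGamma cG opt.
rewrite -!transportZ.
apply: le_trans (ler_transport cGamma lowE) _; apply: le_trans (ler_transport cG upE).
by rewrite (transportD Gamma C) (transportD G C) !transport_separable // lerD2r.
Qed.

Lemma barycentric_projection_le (d : nat) (Gamma : 'M[R]_(n, p))
    (a : 'I_n -> 'rV[R]_d) (b : 'I_p -> 'rV[R]_d) :
  is_coupling alpha Gamma ->
  n%:R^-1 * \sum_(i < n) sqnorm2 (n%:R *: \sum_(j < p) Gamma i j *: b j - a i)
  <= coupling_cost a b Gamma.
Proof.
move=> [G_ge0 [_ row_sum]]; rewrite mulr_sumr; apply: ler_sum => i _.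
have n_gt0 : 0 < n%:R :> R by rewrite ltr0n (leq_ltn_trans (leq0n i) (ltn_ord i)).
have weights_sum1 : \sum_(j < p) n%:R * Gamma i j = 1.
  by rewrite -mulr_sumr row_sum divff ?gt_eqF.
rewrite scaler_sumr; under eq_bigr do rewrite scalerA.
apply: le_trans (ler_wpM2l _ (sqnorm2_convex_comb_le _ _ _ weights_sum1)) _.
- by rewrite invr_ge0 ltW.
- by move=> j; rewrite mulr_ge0 ?G_ge0 ?ltW.
rewrite mulr_sumr le_eqVlt; apply/orP; left; apply/eqP; apply: eq_bigr => j _.
by rewrite sqnorm2_distC mulrA mulKf ?gt_eqF.
Qed.

End Transport.

Lemma le_W2sq_discrete (R : realType) (n p d : nat) (a : 'I_n -> 'rV[R]_d)
    (alpha : 'rV[R]_p) (b : 'I_p -> 'rV[R]_d) (x : R) :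
  (exists G : 'M[R]_(n, p), is_coupling alpha G) ->
  (forall G, is_coupling alpha G -> x <= coupling_cost a b G) ->
  x <= W2sq_discrete a alpha b.
Proof.
move=> [G0 cG0] lb; apply: lb_le_inf; first by exists (coupling_cost a b G0), G0.
by move=> _ [G [cG ->]]; apply: lb.
Qed.

Theorem theorem4 (R : realType) (n d p : nat)
  (X : 'I_n -> 'rV[R]_d) (psi : 'rV[R]_d -> R) (fstar : 'rV[R]_d -> 'rV[R]_d)
  (lam L B : R) (alpha : 'rV[R]_p) (thetahat : 'I_p -> 'rV[R]_d) (Gamma : 'M[R]_(n, p)) :
  is_gradient psi fstar ->
  0 < lam ->
  (forall x z, psi z >= psi x + dotv (fstar x) (z - x) + lam / 2 * sqnorm2 (x - z)) ->
  0 < L ->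
  (forall x z, psi z <= psi x + dotv (fstar x) (z - x) + L / 2 * sqnorm2 (x - z)) ->
  (forall i, norm2 (fstar (X i)) <= B) ->
  (forall j, 0 < alpha 0 j) -> \sum_(j < p) alpha 0 j = 1 ->
  is_coupling alpha Gamma ->
  (forall G : 'M[R]_(n, p), is_coupling alpha G ->
     \sum_(i < n) \sum_(j < p) Gamma i j * (1 / 2 * sqnorm2 (X i - thetahat j))
     <= \sum_(i < n) \sum_(j < p) G i j * (1 / 2 * sqnorm2 (X i - thetahat j))) ->
  let fhat := fun i : 'I_n => n%:R *: \sum_(j < p) Gamma i j *: thetahat j in
  n%:R^-1 * \sum_(i < n) sqnorm2 (fhat i - fstar (X i))
  <= L / lam * W2sq_discrete (fun i => fstar (X i)) alpha thetahat.
Proof.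
move=> _ lam_gt0 convex L_gt0 smooth _ _ _ cGamma opt /=.
set h := conjugate psi.
set a := fun i => psi (X i) - 1 / 2 * sqnorm2 (X i).
set b := fun j => h (thetahat j) - 1 / 2 * sqnorm2 (thetahat j).
have gapE i j : 1 / 2 * sqnorm2 (X i - thetahat j) + (a i + b j) =
    psi (X i) + h (thetahat j) - dotv (X i) (thetahat j).
  by rewrite /a /b /= sqnorm2B; field.
have cost_le G : is_coupling alpha G ->
    coupling_cost (fun i => fstar (X i)) thetahat Gamma
    <= L / lam * coupling_cost (fun i => fstar (X i)) thetahat G.
  move=> cG; rewrite -(ler_pM2l (_ : 0 < (2 * L)^-1)) ?invr_gt0 ?mulr_gt0 //.
  rewrite mulrA; have -> : (2 * L)^-1 * (L / lam) = (2 * lam)^-1 by field; rewrite !gt_eqF.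
  apply: (optimal_coupling_compare (a := a) (b := b)) cGamma cG (opt G cG) => i j.
    by rewrite gapE; apply: fenchel_gap_ge convex smooth _ _.
  by rewrite gapE; apply: fenchel_gap_le.
rewrite -ler_pdivrMl ?divr_gt0 //; apply: le_W2sq_discrete; first by exists Gamma.
move=> G cG; rewrite ler_pdivrMl ?divr_gt0 //.
exact: le_trans (barycentric_projection_le _ _ cGamma) (cost_le G cG).
Qed.
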